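(* Let $\lambda_1,\lambda_2\ge0$ and let $RF(\mathbf m)$ be a resonance family with $RF(\mathbf m)\cap\mathcal B(\lambda+\rho)=\emptyset$. Then $$\sum_{\mathbf n\in RF(\mathbf m)}I_\lambda(\mathbf n)=0;$$ equivalently (since every $\mathbf n\in RF(\mathbf m)$ satisfies $I_\lambda(\mathbf n)=G_{res}(\mathbf n)\,x_1^{k_1(\mathbf n)}x_2^{k_2(\mathbf n)}$ and all $\mathbf n$ in the family have the same weight), $\sum_{\mathbf n\in RF(\mathbf m)}G_{res}(\mathbf n)=0$, where $G_{res}(\mathbf n)=q^{-d(\mathbf n)}(1-q^{-1})\prod_{j\in\{1,2,5,6\}}G(s_j(\mathbf n),n_j)$.
   Context: For $\mathbf m\in\mathbb Z_{\ge0}^6$ (a Lusztig datum for $G_2$ with respect to the reduced word $(2,1,2,1,2,1)$, $\alpha_1$ long, $\alpha_2$ short) and integers $\lambda_1,\lambda_2\ge0$: $s_1=\lambda_2+m_5+m_6-m_1-m_2-m_3$, $s_2=\lambda_2+m_5+m_6-m_2-2m_3$, $s_3=\lambda_2+m_6-m_3-m_4$, $s_4=\lambda_2+m_6-m_4-m_5$, $s_5=\lambda_2-m_5$, $s_6=\lambda_1-m_6$. $\mathcal B(\lambda+\rho)$: all $s_j\ge-1$ and $2s_3-s_4\ge-1$. $\mathcal B(\lambda+\rho)_{res}$: $m_3=m_5$, $s_j\ge-1$ for $j\in\{1,2,5,6\}$, $s_3=s_4\le0$ even; decoration $d(\mathbf m)=-s_3/2$. Weight $k(\mathbf m)=(k_1,k_2)=(m_2+3m_3+2m_4+3m_5+m_6,\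 m_1+m_2+2m_3+m_4+m_5)$. $G(s,m)=1-q^{-1}$ if $m>0,s\ge0$; $-q^{-1}$ if $m>0,s=-1$; $1$ if $m=0,s\ge0$; $0$ otherwise; $q>1$ is the residue field size of a non-archimedean local field $F$. Arrays $\left[\begin{smallmatrix}a&b&c&b&d\\&x&y&z&\\&&k&&\end{smallmatrix}\right]$ (entries in $\mathbb Z_{\ge0}$) with operators $e_1$: $(a,c,d;y;k)\mapsto(a-1,c+1,d-1;y+1;k+1)$, zero if $\min\{a,d\}=0$; $e_2$: $(b,c;x,z;k)\mapsto(b-1,c+3;x+1,z+1;k+1)$, zero if $b=0$ (unlisted entries unchanged, both copies of $b$ change together). $A(\mathbf m)=\left[\begin{smallmatrix}m_2&m_5&m_4&m_5&m_6\\&s_2+1&s_6+1&s_5+1&\\&&d(\mathbf m)&&\end{smallmatrix}\right]$. $\mathrm{hd}(A)=e_1^{\epsilon_1(A)}e_2^{\epsilon_2(A)}(A)$ with $\epsilon_i(A)=\max\{n:e_i^n(A)\ne0\}$. On $\mathcal B(\lambda+\rho)_{res}$, $\mathbf m\sim\mathbf n$ iff $k(\mathbf m)=k(\mathbf n)$ and $\mathrm{hd}(A(\mathbf m))=\mathrm{hd}(A(\mathbf n))$; the class of $\mathbf m$ is the resonance family $RF(\mathbf m)$. $I_\lambda(\mathbf n)$ is the MV integral $\int_{C^{\underline i}(\mathbf n)}f(u)\psi_\lambda(u)du$ over the cell $C^{\underline i}(\mathbf n)\subset U^-$ of the split simply-connected group $G_2(F)$ determined by the Iwasawa decomposition algorithm,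 with $f(u\varpi^{n_1\alpha_1^\vee+n_2\alpha_2^\vee}k)=(q^{-1}x_1)^{n_1}(q^{-1}x_2)^{n_2}$ ($u\in U^+$, $k\in G_2(\mathcal O)$), $\psi_\lambda(u)=\psi(\varpi^{\lambda_1}c_1(u)+\varpi^{\lambda_2}c_2(u))$ for $\psi$ of conductor $\mathcal O$ and $c_i(u)$ the simple-root coordinates of $u$, and $du$ Haar measure with $\mathrm{vol}(U^-(\mathcal O))=1$. *)

From HB Require Import structures.
From mathcomp Require Import all_boot all_order all_algebra.
Set Implicit Arguments. Unset Strict Implicit. Unset Printing Implicit Defensive.
Import Order.TTheory GRing.Theory Num.Theory.

Record LD := mkLD { m1 : nat; m2 : nat; m3 : nat; m4 : nat; m5 : nat; m6 : nat }.

Local Open Scope ring_scope.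

Section S.
Variables (lam1 lam2 : nat).

Definition s1 (m : LD) : int :=
  (lam2 + m5 m + m6 m)%:Z - (m1 m + m2 m + m3 m)%:Z.
Definition s2 (m : LD) : int :=
  (lam2 + m5 m + m6 m)%:Z - (m2 m + 2 * m3 m)%:Z.
Definition s3 (m : LD) : int :=
  (lam2 + m6 m)%:Z - (m3 m + m4 m)%:Z.
Definition s4 (m : LD) : int :=
  (lam2 + m6 m)%:Z - (m4 m + m5 m)%:Z.
Definition s5 (m : LD) : int := lam2%:Z - (m5 m)%:Z.
Definition s6 (m : LD) : int := lam1%:Z - (m6 m)%:Z.

Definition inB (m : LD) : bool :=
  [&& -1 <= s1 m, -1 <= s2 m, -1 <= s3 m, -1 <= s4 m, -1 <= s5 m, -1 <= s6 m
    & -1 <= 2 * s3 m - s4 m].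

Definition inBres (m : LD) : bool :=
  [&& m3 m == m5 m, -1 <= s1 m, -1 <= s2 m, -1 <= s5 m, -1 <= s6 m,
      s3 m == s4 m, s3 m <= 0 & (2 %| s3 m)%Z].

Definition deco (m : LD) : int := ((- s3 m) %/ 2)%Z.

Definition kw1 (m : LD) : nat := (m2 m + 3 * m3 m + 2 * m4 m + 3 * m5 m + m6 m)%N.
Definition kw2 (m : LD) : nat := (m1 m + m2 m + 2 * m3 m + m4 m + m5 m)%N.

(* arrays [a b c b d ; x y z ; k] encoded as (a,b,c,d,x,y,z,k); b stored once *)
Definition arr := (nat * nat * nat * nat * nat * nat * nat * nat)%type.

Definition e1 (A : arr) : option arr :=
  let: (a, b, c, d, x, y, z, k) := A in
  if minn a d == 0%N then None
  else Some (a.-1, b, c.+1, d.-1, x, y.+1, z, k.+1).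

Definition e2 (A : arr) : option arr :=
  let: (a, b, c, d, x, y, z, k) := A in
  if b == 0%N then None
  else Some (a, b.-1, (c + 3)%N, d, x.+1, y, z.+1, k.+1).

Definition arr_a (A : arr) : nat := let: (a, _, _, _, _, _, _, _) := A in a.
Definition arr_b (A : arr) : nat := let: (_, b, _, _, _, _, _, _) := A in b.

(* e^n applied to an array, 0 (= None) propagated *)
Definition iter_e (e : arr -> option arr) (n : nat) (A : arr) : option arr :=
  iter n (fun o => obind e o) (Some A).

(* eps_i(A) = max{n : e_i^n(A) <> 0}; the max ranges over n <= a (resp. n <= b)
   since each application of e1 (resp. e2) decreases a (resp. b) by one. *)
Definition eps1 (A : arr) : nat :=
  \max_(n < (arr_a A).+1 | iter_e e1 n A != None) n.
Definition eps2 (A : arr) : nat :=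
  \max_(n < (arr_b A).+1 | iter_e e2 n A != None) n.

Definition hd (A : arr) : option arr :=
  iter (eps1 A) (fun o => obind e1 o) (iter_e e2 (eps2 A) A).

(* A(m); entries s_j+1 and d(m) are nonnegative on B_res *)
Definition Aarr (m : LD) : arr :=
  (m2 m, m5 m, m4 m, m6 m, absz (s2 m + 1), absz (s6 m + 1), absz (s5 m + 1), absz (deco m)).

Definition simRF (m n : LD) : bool :=
  [&& kw1 m == kw1 n, kw2 m == kw2 n & hd (Aarr m) == hd (Aarr n)].

Definition inRF (m n : LD) : bool := inBres n && simRF m n.

Variables (R : realFieldType) (q : R).

Definition Gfun (s : int) (mm : nat) : R :=
  if (0 < mm)%N then (if 0 <= s then 1 - q^-1 else if s == -1 then - q^-1 else 0)
  else (if 0 <= s then 1 else 0).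

Definition Gres (n : LD) : R :=
  q ^ (- deco n) * (1 - q^-1) *
  Gfun (s1 n) (m1 n) * Gfun (s2 n) (m2 n) * Gfun (s5 n) (m5 n) * Gfun (s6 n) (m6 n).

(* sum over RF(m); every n in RF(m) has the weight of m, hence all its
   coordinates are <= kw1 m + kw2 m, so the finite box contains RF(m). *)
Definition sumRF (m : LD) : R :=
  let N := (kw1 m + kw2 m).+1 in
  \sum_(n1 < N) \sum_(n2 < N) \sum_(n3 < N) \sum_(n4 < N) \sum_(n5 < N) \sum_(n6 < N)
    (let n := mkLD n1 n2 n3 n4 n5 n6 in if inRF m n then Gres n else 0).

End S.

(* Inside B(lambda+rho)_res two data are resonant iff n1, n2 - n6 and
   n4 + 3 n5 + n6 agree (hd of the arrays has a closed form), so a resonance family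
   is parametrised by (e, f) = (n5, n6) in a product of two intervals, cut by
   e + f <= kappa, with d(n) = kappa - e - f.  Disjointness from B(lambda+rho)
   means that no member has d = 0, and this forces the whole product of intervals
   below the line e + f = kappa.  On it G_res factors as a constant times
   q^e G(lam2 - e, e) * q^f G(lam1 - f, f) * ([s2 >= 0] - q^-1 [n2 > 0]), so the
   family sum is a combination of two products of one-variable sums, and each
   product contains a complete series sum_(i <= L+1) q^i G(L - i, i), which
   telescopes to 0. *)

From mathcomp Require Import all_boot all_order all_algebra zify ring.
Import Order.TTheory GRing.Theory Num.Theory.
Set Implicit Arguments. Unset Strict Implicit. Unset Printing Implicit Defensive.

Lemma iter_eS (e : arr -> option arr) n A :
  iter_e e n.+1 A = obind e (iter_e e n A).
Proof. by []. Qed.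

Lemma iter_e_None (e : arr -> option arr) A B k n :
  iter_e e k A = Some B -> e B = None -> (k < n)%N -> iter_e e n A = None.
Proof.
move=> ekA eB; elim: n => // n IHn; rewrite ltnS leq_eqVlt iter_eS.
by case/predU1P => [<-|/IHn ->]; rewrite ?ekA.
Qed.

Lemma bigmax_iter_e (e : arr -> option arr) A B k M :
  (k < M)%N -> iter_e e k A = Some B -> e B = None ->
  \max_(n < M | iter_e e n A != None) n = k.
Proof.
move=> kM ekA eB; apply/eqP; rewrite eqn_leq; apply/andP; split.
  apply/bigmax_leqP => n; apply: contraR; rewrite -ltnNge => kn.
  by rewrite (iter_e_None ekA eB kn).
by apply: (@leq_bigmax_cond _ _ _ (Ordinal kM)); rewrite /= ekA.
Qed.

Lemma iter_e2E a b c d x y z k n : (n <= b)%N ->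
  iter_e e2 n (a, b, c, d, x, y, z, k) =
  Some (a, b - n, c + 3 * n, d, x + n, y, z + n, k + n)%N.
Proof.
elim: n => [|n IHn] nb; first by rewrite !(addn0, subn0, muln0).
rewrite iter_eS IHn; last exact: ltnW.
rewrite [obind _ _]/= ifN; last by rewrite subn_eq0 -ltnNge.
by congr (Some (_, _, _, _, _, _, _, _)); lia.
Qed.

Lemma iter_e1E a b c d x y z k n : (n <= minn a d)%N ->
  iter_e e1 n (a, b, c, d, x, y, z, k) =
  Some (a - n, b, c + n, d - n, x, y + n, z, k + n)%N.
Proof.
elim: n => [|n IHn] nad; first by rewrite !(addn0, subn0).
rewrite iter_eS IHn; last exact: ltnW.
rewrite [obind _ _]/= ifN; last by apply/eqP; lia.
by congr (Some (_, _, _, _, _, _, _, _)); lia.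
Qed.

Lemma eps2E a b c d x y z k : eps2 (a, b, c, d, x, y, z, k) = b.
Proof.
rewrite /eps2; apply: (bigmax_iter_e (ltnSn b) (iter_e2E a c d x y z k (leqnn b))).
by rewrite /= subnn.
Qed.

Lemma eps1E a b c d x y z k : eps1 (a, b, c, d, x, y, z, k) = minn a d.
Proof.
rewrite /eps1; apply: (bigmax_iter_e _ (iter_e1E b c x y z k (leqnn (minn a d)))).
  by rewrite ltnS geq_minl.
by rewrite /= ifT //; apply/eqP; lia.
Qed.

Lemma hdE a b c d x y z k : let r := minn a d in
  hd (a, b, c, d, x, y, z, k) =
  Some (a - r, 0, c + 3 * b + r, d - r, x + b, y + r, z + b, k + b + r)%N.
Proof.
rewrite /hd eps1E eps2E iter_e2E // subnn.
exact: (iter_e1E 0 (c + 3 * b) (x + b) y (z + b) (k + b) (leqnn (minn a d))).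
Qed.

Local Open Scope ring_scope.

Definition c456 (n : LD) : nat := (m4 n + 3 * m5 n + m6 n)%N.

Lemma simRF_BresE l1 l2 m n : inBres l1 l2 m -> inBres l1 l2 n ->
  simRF l1 l2 m n =
  [&& m1 n == m1 m, (m2 n + m6 m == m6 n + m2 m)%N & c456 n == c456 m].
Proof.
case: m n => [a1 a2 a3 a4 a5 a6] [b1 b2 b3 b4 b5 b6].
rewrite /inBres /simRF /Aarr !hdE /c456 /kw1 /kw2 /deco /s1 /s2 /s3 /s4 /s5 /s6 /=.
move=> Bm Bn; apply/idP/idP.
  by case/and3P => /eqP ? /eqP ? /eqP [*]; apply/and3P; split; apply/eqP; lia.
case/and3P => /eqP ? /eqP ? /eqP ?; apply/and3P; split; apply/eqP; try lia.
by congr (Some (_, _, _, _, _, _, _, _)); lia.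
Qed.

Lemma inB_of_s3_eq0 l1 l2 n : inBres l1 l2 n -> s3 l2 n = 0 -> inB l1 l2 n.
Proof. rewrite /inBres /inB /s1 /s2 /s3 /s4 /s5 /s6; lia. Qed.

Lemma exchange_big3 (R : nmodType) N (G : 'I_N -> 'I_N -> 'I_N -> R) :
  \sum_(x < N) \sum_(y < N) \sum_(z < N) G x y z =
  \sum_(y < N) \sum_(z < N) \sum_(x < N) G x y z.
Proof. by rewrite exchange_big; apply: eq_bigr => y _; rewrite exchange_big. Qed.

Lemma sum_ord_supp1 (R : nmodType) N (F : nat -> R) v :
  (forall i, ~~ ((i == v) && (v < N))%N -> F i = 0) -> \sum_(i < N) F i = F v.
Proof.
move=> F0; have [lt_vN|le_Nv] := ltnP v N.
  rewrite (bigD1 (Ordinal lt_vN)) //= big1 ?addr0 // => i neq_iv.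
  by apply: (F0 i); rewrite lt_vN andbT.
have out_v i : ~~ ((i == v) && (v < N))%N by rewrite ltnNge le_Nv andbF.
by rewrite F0 ?big1 // => i _; apply: F0.
Qed.

Lemma sum4_supp1 (R : nmodType) N (G : nat -> nat -> nat -> nat -> R) v1 v2 v3 v4 :
  (forall a b c d, G a b c d != 0 ->
     [&& a == v1, b == v2, c == v3, d == v4 & [&& v1 < N, v2 < N, v3 < N & v4 < N]%N]) ->
  \sum_(a < N) \sum_(b < N) \sum_(c < N) \sum_(d < N) G a b c d = G v1 v2 v3 v4.
Proof.
move=> suppG.
have G0 a b c d : ~~ [&& a == v1, b == v2, c == v3, d == v4
                      & [&& v1 < N, v2 < N, v3 < N & v4 < N]%N] -> G a b c d = 0.
  by move=> nsupp; apply/eqP; apply: contraNT nsupp; exact: suppG.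
rewrite (sum_ord_supp1 (v := v1)
          (F := fun a => \sum_(b < N) \sum_(c < N) \sum_(d < N) G a b c d)).
  rewrite (sum_ord_supp1 (v := v2) (F := fun b => \sum_(c < N) \sum_(d < N) G v1 b c d)).
    rewrite (sum_ord_supp1 (v := v3) (F := fun c => \sum_(d < N) G v1 v2 c d)).
      by rewrite (sum_ord_supp1 (v := v4) (F := G v1 v2 v3)) => // d d_out; apply: G0; lia.
    by move=> c c_out; apply: big1 => d _; apply: G0; lia.
  by move=> b b_out; apply: big1 => c _; apply: big1 => d _; apply: G0; lia.
by move=> a a_out; apply: big1 => b _; apply: big1 => c _; apply: big1 => d _; apply: G0; lia.
Qed.

Section GSeries.

Variables (R : realFieldType) (q : R).

Lemma Gfun_ge_m1 (s : int) n : -1 <= s ->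
  Gfun q s n = (0 <= s)%R%:R - q^-1 * (0 < n)%N%:R.
Proof.
move=> s_ge; rewrite /Gfun; case: leP => [_|s_lt0].
  by case: (0 < n)%N; rewrite ?mulr1 ?mulr0 ?subr0.
have -> : s = -1 by lia.
by rewrite eqxx; case: (0 < n)%N; rewrite ?mulr1 ?mulr0 ?sub0r ?oppr0.
Qed.

Hypothesis q0 : q != 0.

Definition gterm (L i : nat) : R := q ^+ i * Gfun q (L%:Z - i%:Z) i.

Lemma sum_gterm L n : (n <= L.+1)%N ->
  \sum_(i < n.+1) gterm L i = q ^+ n * (n <= L)%N%:R.
Proof.
have gtermE i : (i <= L.+1)%N -> gterm L i = q ^+ i * ((i <= L)%N%:R - q^-1 * (0 < i)%N%:R).
  move=> le_iL; rewrite /gterm Gfun_ge_m1; last by lia.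
  by have -> : (0 <= L%:Z - i%:Z) = (i <= L)%N by lia.
elim: n => [_|n IHn lt_nL]; first by rewrite big_ord1 gtermE //= mulr0 subr0.
rewrite big_ord_recr /= IHn; last exact: ltnW.
rewrite gtermE // (_ : n <= L = true)%N; last by lia.
by rewrite exprS; field.
Qed.

Lemma sum_gterm_eq0 L N (P : pred nat) : (L.+1 < N)%N ->
  (forall i, (i < N)%N -> P i = (i <= L.+1)%N) ->
  \sum_(i < N) (if P i then gterm L i else 0) = 0.
Proof.
move=> lt_LN PE; rewrite (eq_bigr (fun i : 'I_N => if (i < L.+2)%N then gterm L i else 0)).
  by rewrite -big_mkcond -big_ord_widen // sum_gterm // ltnn mulr0.
by move=> i _; rewrite PE.
Qed.

End GSeries.

Section ResonanceFamily.

Variables (lam1 lam2 : nat) (m : LD).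
Hypothesis Bm : inBres lam1 lam2 m.

Local Notation N := (kw1 m + kw2 m).+1.

(* The members of the family are the [member e f] with (e, f) = (n5, n6); on them
   [deco] equals [kappa - e - f]. *)
Definition member (e f : nat) : LD :=
  mkLD (m1 m) (f + m2 m - m6 m) e (c456 m - 3 * e - f) e f.

Definition kappa : int := deco lam2 m + (m5 m + m6 m)%:Z.

Definition erange (e : nat) : bool :=
  ((e <= lam2.+1) && (e + m2 m <= lam2.+1 + m6 m))%N.

Definition frange (f : nat) : bool :=
  ((f <= lam1.+1) && (m6 m <= f + m2 m))%N.

Local Ltac unfold_family :=
  rewrite /inBres /inB /erange /frange /kappa /member /c456 /kw1 /kw2
          /deco /s1 /s2 /s3 /s4 /s5 /s6 /=.

Lemma inRF_member e f : inRF lam1 lam2 m (member e f) =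
  [&& erange e, frange f, (e + f)%:Z <= kappa & (3 * e + f <= c456 m)%N].
Proof.
rewrite /inRF; case Bmem: (inBres lam1 lam2 (member e f)) => /=.
  by rewrite simRF_BresE //; move: Bm Bmem; unfold_family => *; apply/idP/idP; lia.
by apply/esym/negbTE; apply: contraFN Bmem; move: Bm; unfold_family; lia.
Qed.

Lemma inRF_coords a b c d e f : inRF lam1 lam2 m (mkLD a b c d e f) ->
  [&& a == m1 m, b == f + m2 m - m6 m, c == e, d == c456 m - 3 * e - f
    & [&& m1 m < N, f + m2 m - m6 m < N, e < N & c456 m - 3 * e - f < N]]%N.
Proof.
by case/andP=> Bn; rewrite simRF_BresE //; move: Bm Bn; unfold_family; lia.
Qed.

Lemma kappa_lt : kappa < N%:Z.
Proof. by move: Bm; unfold_family; lia. Qed.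

Hypothesis disjB : forall n, inRF lam1 lam2 m n -> ~~ inB lam1 lam2 n.

(* Otherwise some member has [e' + f' = kappa], i.e. [s3 = 0], and lies in
   [B(lambda + rho)]: take [e'] as large as possible below [e], [kappa - (m6 - m2)]
   and [(kappa + lam2) / 2], and [f' = kappa - e']. *)
Lemma range_lt_kappa e f : erange e -> frange f -> (e + f)%:Z < kappa.
Proof.
move=> Ee Ff; rewrite ltNge; apply/negP => le_kappa.
pose k := absz kappa.
have kE : k%:Z = kappa by move: Bm; rewrite /k; unfold_family; lia.
pose e' := minn e (minn (k - (m6 m - m2 m)) ((k + lam2) %/ 2)).
have memRF : inRF lam1 lam2 m (member e' (k - e')).
  by rewrite inRF_member; move: Bm Ee Ff le_kappa kE; rewrite /e'; unfold_family; lia.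
have /negP := disjB memRF; apply; apply: inB_of_s3_eq0; first by case/andP: memRF.
by move: Bm kE memRF; rewrite inRF_member /e'; unfold_family; lia.
Qed.

Lemma inRF_memberE e f : inRF lam1 lam2 m (member e f) = erange e && frange f.
Proof.
rewrite inRF_member; case Ee: (erange e); case Ff: (frange f) => //=.
by have := range_lt_kappa Ee Ff; move: Bm Ee Ff; unfold_family; lia.
Qed.

Lemma lam2_lt_N : (m2 m <= m6 m)%N -> (lam2.+1 < N)%N.
Proof.
move=> le26; have Ee : erange lam2.+1 by rewrite /erange; lia.
have Ff : frange (m6 m) by move: Bm; unfold_family; lia.
by have := range_lt_kappa Ee Ff; have := kappa_lt; lia.
Qed.

Lemma lam1_lt_N : (m6 m <= m2 m)%N -> (lam1.+1 < N)%N.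
Proof.
move=> le62; have Ee : erange (m5 m) by move: Bm; unfold_family; lia.
have Ff : frange lam1.+1 by rewrite /frange; lia.
by have := range_lt_kappa Ee Ff; have := kappa_lt; lia.
Qed.

Variables (R : realFieldType) (q : R).
Hypothesis q0 : q != 0.

Lemma sumRF_member : sumRF lam1 lam2 q m =
  \sum_(e < N) \sum_(f < N) (if erange e && frange f then Gres lam1 lam2 q (member e f) else 0).
Proof.
rewrite /sumRF /=.
under eq_bigr => a _ do under eq_bigr => b _ do under eq_bigr => c _ do rewrite exchange_big3.
under eq_bigr => a _ do under eq_bigr => b _ do rewrite exchange_big3.
under eq_bigr => a _ do rewrite exchange_big3.
rewrite exchange_big3; apply: eq_bigr => e _; apply: eq_bigr => f _.
pose G a b c d := let n := mkLD a b c d e f in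
  if inRF lam1 lam2 m n then Gres lam1 lam2 q n else 0.
rewrite (sum4_supp1 (G := G) (v1 := m1 m) (v2 := (f + m2 m - m6 m)%N) (v3 := e)
                    (v4 := (c456 m - 3 * e - f)%N)).
  by rewrite /G -[mkLD _ _ _ _ _ _]/(member e f) inRF_memberE.
move=> a b c d; rewrite /G; case: ifP => [inn _|_]; [exact: inRF_coords inn | by rewrite eqxx].
Qed.

Definition s2_nonneg (e : nat) : bool := (e + m2 m <= lam2 + m6 m)%N.
Definition n2_pos (f : nat) : bool := (m6 m < f + m2 m)%N.

Definition Gres_const : R := q ^ (- kappa) * (1 - q^-1) * Gfun q (s1 lam2 m) (m1 m).

Lemma Gres_member e f : erange e -> frange f ->
  Gres lam1 lam2 q (member e f) = Gres_const *
    (gterm q lam2 e * gterm q lam1 f * ((s2_nonneg e)%:R - q^-1 * (n2_pos f)%:R)).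
Proof.
move=> Ee Ff; have lt_kappa := range_lt_kappa Ee Ff.
have decoE : - deco lam2 (member e f) = - kappa + e%:Z + f%:Z.
  by move: Bm Ee Ff lt_kappa; unfold_family; lia.
have s1E : s1 lam2 (member e f) = s1 lam2 m by move: Bm Ff; unfold_family; lia.
have G2E : Gfun q (s2 lam2 (member e f)) (m2 (member e f)) =
           (s2_nonneg e)%:R - q^-1 * (n2_pos f)%:R.
  rewrite Gfun_ge_m1; last by move: Bm Ee Ff; unfold_family; lia.
  move: Ff; rewrite /s2_nonneg /n2_pos; unfold_family => Ff.
  have -> : (0 < f + m2 m - m6 m)%N = (m6 m < f + m2 m)%N by lia.
  by congr (_%:R - _); lia.
rewrite /Gres decoE s1E !expfzDr // -!exprnP /gterm /Gres_const.
by rewrite [Gfun q (s2 _ _) _]G2E /=; ring.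
Qed.

Definition esum (P : pred nat) : R :=
  \sum_(e < N) (if erange e && P e then gterm q lam2 e else 0).
Definition fsum (P : pred nat) : R :=
  \sum_(f < N) (if frange f && P f then gterm q lam1 f else 0).

Lemma sumRF_factor : sumRF lam1 lam2 q m =
  Gres_const * (esum s2_nonneg * fsum predT - q^-1 * (esum predT * fsum n2_pos)).
Proof.
rewrite sumRF_member /esum /fsum !big_distrlr mulr_sumr -sumrB mulr_sumr.
apply: eq_bigr => e _; rewrite mulr_sumr -sumrB mulr_sumr; apply: eq_bigr => f _.
case Ee: (erange e); case Ff: (frange f); rewrite /= ?(mul0r, mulr0, subrr) //.
by rewrite Gres_member //; case: (s2_nonneg e); case: (n2_pos f); rewrite /=; ring.
Qed.

Lemma esum_eq0 (P : pred nat) : (m2 m <= m6 m)%N -> (forall e, e <= lam2.+1 -> P e)%N -> esum P = 0.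
Proof.
move=> le26 PE; apply: (sum_gterm_eq0 q0 (P := fun e => erange e && P e) (lam2_lt_N le26)) => e _.
have [le_e|gt_e] := leqP e lam2.+1; last by rewrite /erange leqNgt gt_e.
by rewrite PE // andbT /erange le_e; lia.
Qed.

Lemma fsum_eq0 (P : pred nat) : (m6 m <= m2 m)%N -> (forall f, f <= lam1.+1 -> P f)%N -> fsum P = 0.
Proof.
move=> le62 PF; apply: (sum_gterm_eq0 q0 (P := fun f => frange f && P f) (lam1_lt_N le62)) => f _.
have [le_f|gt_f] := leqP f lam1.+1; last by rewrite /frange leqNgt gt_f.
by rewrite PF // andbT /frange le_f; lia.
Qed.

Lemma esum_s2_nonneg_fsum_eq0 : esum s2_nonneg * fsum predT = 0.
Proof.
have [lt26|le62] := ltnP (m2 m) (m6 m).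
  by rewrite esum_eq0 ?mul0r ?(ltnW lt26) // => e; rewrite /s2_nonneg; lia.
by rewrite fsum_eq0 ?mulr0.
Qed.

Lemma esum_fsum_n2_pos_eq0 : esum predT * fsum n2_pos = 0.
Proof.
have [le26|lt62] := leqP (m2 m) (m6 m); first by rewrite esum_eq0 ?mul0r.
by rewrite fsum_eq0 ?mulr0 ?(ltnW lt62) // => f; rewrite /n2_pos; lia.
Qed.

End ResonanceFamily.

Theorem mainTheorem11 (lam1 lam2 : nat) (R : realFieldType) (q : R) (hq : 1 < q)
  (m : LD) (hm : inBres lam1 lam2 m)
  (hdisj : forall n : LD, inRF lam1 lam2 m n -> ~~ inB lam1 lam2 n) :
  sumRF lam1 lam2 q m = 0.
Proof.
have q0 : q != 0 by rewrite gt_eqF // (lt_trans ltr01 hq).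
rewrite (sumRF_factor hm hdisj q0) (esum_s2_nonneg_fsum_eq0 hm hdisj q0).
by rewrite (esum_fsum_n2_pos_eq0 hm hdisj q0) mulr0 subrr mulr0.
Qed.
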